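(* Let $\mathcal F$ be a completely positive trace-preserving map on $M_D$ with $\tau(\mathcal F)<1$, and let $\mathcal Z$ be its fundamental channel. Then $$\|\mathcal Z\|_{1\to1}\le\frac{1+\tau(\mathcal F)}{1-\tau(\mathcal F)}.$$
   Context: Notation: $M_D$ is the space of complex $D\times D$ matrices, and $\|\mathcal F\|_{1\to1}:=\sup_{\sigma\ne0}\|\mathcal F(\sigma)\|_1/\|\sigma\|_1$ with $\|\cdot\|_1$ the trace norm. The ergodicity coefficient is $\tau(\mathcal F):=\sup\{\|\mathcal F(\sigma)\|_1/\|\sigma\|_1:\ 0\ne\sigma,\ \mathrm{Tr}\,\sigma=0\}$. Fundamental channel: for a completely positive trace-preserving map $\mathcal F$ with $\tau(\mathcal F)<1$ and unique fixed density matrix $\rho$, let $\mathcal F^\infty(X):=\mathrm{Tr}(X)\,\rho$, which equals $\lim_{k\to\infty}\mathcal F^k$. The fundamental channel is $\mathcal Z:=(\mathrm{id}-\mathcal F+\mathcal F^\infty)^{-1}$. *)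

(* Complex numbers are modelled by an arbitrary
   numClosedFieldType C (algebraically closed field with conjugation and
   the canonical partial order; e.g. algC). *)
From HB Require Import structures.
From mathcomp Require Import all_boot all_order all_algebra.
Set Implicit Arguments. Unset Strict Implicit. Unset Printing Implicit Defensive.
Import Order.TTheory GRing.Theory Num.Theory Num.Def.
Local Open Scope ring_scope.

Definition adjmx {C : numClosedFieldType} m n (X : 'M[C]_(m, n)) : 'M[C]_(n, m) :=
  (map_mx conjC X)^T.

(* trace norm  ||X||_1 = Tr sqrt(X^* X) = sum of the square roots of the
   eigenvalues of X^* X (spectral_diag gives the eigenvalues of the normal
   matrix X^* X, with multiplicity). *)
Definition trnorm {C : numClosedFieldType} n (X : 'M[C]_n) : C :=
  \sum_(i < n) sqrtC (spectral_diag (adjmx X *m X) 0 i).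

Definition psdmx {C : numClosedFieldType} n (A : 'M[C]_n) : Prop :=
  forall v : 'cV[C]_n, 0 <= (adjmx v *m A *m v) 0 0.

Definition densitymx {C : numClosedFieldType} n (A : 'M[C]_n) : Prop :=
  psdmx A /\ \tr A = 1.

(* complete positivity: id_k (x) F maps positive elements of
   M_k (x) M_D (= k x k block matrices with D x D blocks) to positive ones,
   for every k. *)
Definition completely_positive {C : numClosedFieldType} D
  (F : 'M[C]_D -> 'M[C]_D) : Prop :=
  forall (k : nat) (B : 'I_k -> 'I_k -> 'M[C]_D),
    psdmx (\mxblock_(i < k, j < k) B i j) ->
    psdmx (\mxblock_(i < k, j < k) F (B i j)).

Definition trace_preserving {C : numClosedFieldType} D
  (F : 'M[C]_D -> 'M[C]_D) : Prop :=
  forall X, \tr (F X) = \tr X.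

Definition is_lub {C : numClosedFieldType} (S : C -> Prop) (t : C) : Prop :=
  (forall s, S s -> s <= t) /\ (forall u, (forall s, S s -> s <= u) -> t <= u).

Definition ergodicity_set {C : numClosedFieldType} D
  (F : 'M[C]_D -> 'M[C]_D) (r : C) : Prop :=
  exists sigma : 'M[C]_D,
    [/\ sigma != 0, \tr sigma = 0 & r = trnorm (F sigma) / trnorm sigma].

Definition ergodicity_coeff {C : numClosedFieldType} D
  (F : 'M[C]_D -> 'M[C]_D) (t : C) : Prop :=
  is_lub (ergodicity_set F) t.

Definition Finf {C : numClosedFieldType} D (rho : 'M[C]_D) (X : 'M[C]_D) : 'M[C]_D :=
  \tr X *: rho.

Definition fundamental_channel {C : numClosedFieldType} D
  (F : 'M[C]_D -> 'M[C]_D) (rho : 'M[C]_D) (Z : 'M[C]_D -> 'M[C]_D) : Prop :=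
  (forall X, Z (X - F X + Finf rho X) = X) /\
  (forall X, Z X - F (Z X) + Finf rho (Z X) = X).

(* The trace norm is the maximum of [Re Tr(U X)] over contractions [U],
   attained at the polar factor of [X]; this gives the triangle inequality,
   [|Tr X| <= ||X||_1] and [||rho||_1 = Tr rho] for positive [rho].
   Since [F] is trace preserving and fixes [rho], [W := Z X] satisfies
   [W = X + F Y] with [Y := W - Tr(X) rho] traceless, and
   [Y = (X - Tr(X) rho) + F Y].  The contraction [||F Y||_1 <= tau ||Y||_1]
   then gives [(1 - tau) ||Y||_1 <= 2 ||X||_1], whence
   [||W||_1 <= ||X||_1 + tau ||Y||_1 <= (1 + tau)/(1 - tau) ||X||_1]; the
   same contraction makes [id - F + F^infty] injective, so [Z] exists. *)
From HB Require Import structures.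
From mathcomp Require Import all_boot all_order all_algebra.
From mathcomp Require Import ring.
Import Order.TTheory GRing.Theory Num.Theory.
Set Implicit Arguments. Unset Strict Implicit. Unset Printing Implicit Defensive.
Local Open Scope ring_scope.

Section ConjTranspose.
Variable C : numClosedFieldType.

Lemma adjmxE m n (A : 'M[C]_(m, n)) i j : adjmx A i j = (A j i)^*.
Proof. by rewrite /adjmx !mxE. Qed.

Lemma adjmxK m n (A : 'M[C]_(m, n)) : adjmx (adjmx A) = A.
Proof. by apply/matrixP => i j; rewrite !adjmxE conjCK. Qed.

Lemma adjmxD m n (A B : 'M[C]_(m, n)) : adjmx (A + B) = adjmx A + adjmx B.
Proof. by apply/matrixP => i j; rewrite /adjmx !mxE rmorphD. Qed.

Lemma adjmxB m n (A B : 'M[C]_(m, n)) : adjmx (A - B) = adjmx A - adjmx B.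
Proof. by apply/matrixP => i j; rewrite /adjmx !mxE rmorphB. Qed.

Lemma adjmxZ m n (c : C) (A : 'M[C]_(m, n)) : adjmx (c *: A) = c^* *: adjmx A.
Proof. by apply/matrixP => i j; rewrite /adjmx !mxE rmorphM. Qed.

Lemma adjmxM m n p (A : 'M[C]_(m, n)) (B : 'M[C]_(n, p)) :
  adjmx (A *m B) = adjmx B *m adjmx A.
Proof. by rewrite /adjmx map_mxM trmx_mul. Qed.

Lemma adjmx_diag n (v : 'rV[C]_n) : (forall i, (v 0 i)^* = v 0 i) ->
  adjmx (diag_mx v) = diag_mx v.
Proof.
move=> v_real; apply/matrixP => i j; rewrite adjmxE !mxE.
by case: (eqVneq i j) => [->|_]; rewrite ?mulr1n ?v_real // !mulr0n conjC0.
Qed.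

Lemma map_conj_trmx m n (A : 'M[C]_(m, n)) : map_mx Num.conj A^T = adjmx A.
Proof. by rewrite /adjmx map_trmx. Qed.

Lemma mulmx_adjE m n p (A : 'M[C]_(m, n)) (B : 'M[C]_(p, n)) i j :
  (A *m adjmx B) i j = \sum_k A i k * (B j k)^*.
Proof. by rewrite mxE; apply: eq_bigr => k _; rewrite adjmxE. Qed.

Lemma mulmx_adj_row m n p (A : 'M[C]_(m, n)) (B : 'M[C]_(p, n)) i j :
  (row i A *m adjmx (row j B)) 0 0 = (A *m adjmx B) i j.
Proof. by rewrite !mulmx_adjE; apply: eq_bigr => k _; rewrite !mxE. Qed.

Lemma mulmx_entry_row m n p (A : 'M[C]_(m, n)) (B : 'M[C]_(n, p)) i j :
  (A *m B) i j = (row i A *m adjmx (row j (adjmx B))) 0 0.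
Proof. by rewrite mulmx_adj_row adjmxK. Qed.

Lemma mulmx_adj_diag_ge0 m n (A : 'M[C]_(m, n)) i : 0 <= (A *m adjmx A) i i.
Proof. by rewrite mulmx_adjE; apply: sumr_ge0 => k _; apply: mul_conjC_ge0. Qed.

Lemma mulmx_adj_diag_eq0 m n (A : 'M[C]_(m, n)) i :
  (A *m adjmx A) i i = 0 -> forall k, A i k = 0.
Proof.
rewrite mulmx_adjE => /psumr_eq0P A_i0 k; apply/eqP; rewrite -mul_conjC_eq0.
by apply/eqP/A_i0 => // l _; apply: mul_conjC_ge0.
Qed.

Lemma spectral_mulmx_adj n (S : 'M[C]_n) :
  spectralmx S *m adjmx (spectralmx S) = 1%:M.
Proof. by rewrite -map_conj_trmx; apply/unitarymxP/spectral_unitarymx. Qed.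

Lemma invmx_spectral n (S : 'M[C]_n) : invmx (spectralmx S) = adjmx (spectralmx S).
Proof. by rewrite -map_conj_trmx invmx_unitary // spectral_unitarymx. Qed.

Lemma adj_spectral_mulmx n (S : 'M[C]_n) :
  adjmx (spectralmx S) *m spectralmx S = 1%:M.
Proof. by rewrite -invmx_spectral mulVmx // spectral_unit. Qed.

Lemma spectral_decomp n (S : 'M[C]_n) : adjmx S = S ->
  S = adjmx (spectralmx S) *m diag_mx (spectral_diag S) *m spectralmx S.
Proof.
move=> S_herm; rewrite -invmx_spectral; apply/orthomx_spectralP.
by apply/normalmxP; rewrite map_conj_trmx S_herm.
Qed.

(* Expand [0 <= |s a - b|^2] and divide by [s]. *)
Lemma dotmx_re_le m (a b : 'rV[C]_m) (s : C) : 0 <= s ->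
  (a *m adjmx a) 0 0 <= 1 -> (b *m adjmx b) 0 0 = s ^+ 2 ->
  (a *m adjmx b) 0 0 + ((a *m adjmx b) 0 0)^* <= 2%:R * s.
Proof.
move=> s_ge0 a_le1 b_s.
have := mulmx_adj_diag_ge0 (s *: a - b) 0.
rewrite adjmxB adjmxZ (geC0_conj s_ge0) mulmxBl !mulmxBr -!scalemxAl -!scalemxAr.
have ba_conj : (b *m adjmx a) 0 0 = ((a *m adjmx b) 0 0)^*.
  by rewrite -adjmxE adjmxM adjmxK.
set aa := a *m adjmx a; set ab := a *m adjmx b.
do 2 rewrite ![((_ : 'M_1) + _) 0 0]mxE ![(- (_ : 'M_1)) 0 0]mxE ![(_ *: (_ : 'M_1)) 0 0]mxE.
rewrite ba_conj b_s => sq_ge0.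
have [s0|s_neq0] := eqVneq s 0.
  have b0 k : b 0 k = 0 by apply: mulmx_adj_diag_eq0; rewrite b_s s0 expr0n.
  have -> : ab 0 0 = 0 by rewrite /ab mulmx_adjE big1 // => k _; rewrite b0 conjC0 mulr0.
  by rewrite s0 conjC0 addr0 mulr0.
have s_gt0 : 0 < s by rewrite lt_def s_neq0 s_ge0.
have saa_le : s * s * aa 0 0 <= s ^+ 2 by rewrite -expr2 ler_piMr ?exprn_ge0.
rewrite -(ler_pM2l s_gt0); apply: le_trans (_ : s * s * aa 0 0 + s ^+ 2 <= _).
  rewrite -subr_ge0 (_ : _ - _ = s * (s * aa 0 0) - s * ab 0 0 - (s * (ab 0 0)^* - s ^+ 2)) //.
  ring.
by rewrite (_ : s * (2%:R * s) = s ^+ 2 + s ^+ 2) ?lerD2r //; ring.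
Qed.

End ConjTranspose.

Section SingularValues.
Variables (C : numClosedFieldType) (n : nat).
Implicit Types X : 'M[C]_n.

Definition gram X := adjmx X *m X.
Definition gram_basis X := spectralmx (gram X).
Definition gram_eig X := spectral_diag (gram X).
Definition singval X i := sqrtC (gram_eig X 0 i).
Definition svd_left X := X *m adjmx (gram_basis X).

Lemma gram_herm X : adjmx (gram X) = gram X.
Proof. by rewrite /gram adjmxM adjmxK. Qed.

Lemma svdE X : X = svd_left X *m gram_basis X.
Proof. by rewrite /svd_left -mulmxA adj_spectral_mulmx mulmx1. Qed.

Lemma gram_svd_left X : adjmx (svd_left X) *m svd_left X = diag_mx (gram_eig X).
Proof.
rewrite /svd_left adjmxM adjmxK -mulmxA (mulmxA (adjmx X)) -/(gram X).
have gramE : gram X = adjmx (gram_basis X) *m diag_mx (gram_eig X) *m gram_basis X.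
  exact: spectral_decomp (gram_herm X).
by rewrite gramE !mulmxA spectral_mulmx_adj mul1mx -mulmxA spectral_mulmx_adj mulmx1.
Qed.

Lemma gram_eigE X i : gram_eig X 0 i = (adjmx (svd_left X) *m svd_left X) i i.
Proof. by rewrite gram_svd_left mxE eqxx mulr1n. Qed.

Lemma gram_eig_ge0 X i : 0 <= gram_eig X 0 i.
Proof. by rewrite gram_eigE -{2}[svd_left X]adjmxK mulmx_adj_diag_ge0. Qed.

Lemma singval_ge0 X i : 0 <= singval X i.
Proof. by rewrite sqrtC_ge0 gram_eig_ge0. Qed.

Lemma singvalK X i : singval X i ^+ 2 = gram_eig X 0 i.
Proof. exact: sqrtCK. Qed.

Lemma trnormE X : trnorm X = \sum_i singval X i.
Proof. by []. Qed.

Lemma trnorm_ge0 X : 0 <= trnorm X.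
Proof. by rewrite trnormE; apply: sumr_ge0 => i _; apply: singval_ge0. Qed.

Lemma trnorm_gt0 X : X != 0 -> 0 < trnorm X.
Proof.
move=> X_neq0; rewrite lt_def trnorm_ge0 andbT; apply: contra X_neq0 => /eqP.
rewrite trnormE => /psumr_eq0P sv0.
have svd_left0 : svd_left X = 0.
  apply/matrixP => k i; rewrite [RHS]mxE -[svd_left X k i]conjCK -adjmxE.
  have := @mulmx_adj_diag_eq0 _ _ _ (adjmx (svd_left X)) i.
  rewrite adjmxK -gram_eigE -singvalK sv0 ?expr0n // => [/(_ erefl k) ->|j _].
    by rewrite conjC0.
  exact: singval_ge0.
by rewrite [X]svdE svd_left0 mul0mx.
Qed.

End SingularValues.

Section TraceNormDuality.
Variables (C : numClosedFieldType) (n : nat).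
Implicit Types X U : 'M[C]_n.

Definition contraction U := forall r : 'rV[C]_n,
  ((r *m U) *m adjmx (r *m U)) 0 0 <= (r *m adjmx r) 0 0.

Lemma contraction1 : contraction 1%:M.
Proof. by move=> r; rewrite mulmx1. Qed.

Lemma contractionZ (w : C) U : `|w| <= 1 -> contraction U -> contraction (w *: U).
Proof.
move=> w_le1 U_contr r; rewrite -scalemxAr adjmxZ -scalemxAl -scalemxAr.
rewrite ![(_ *: (_ : 'M_1)) 0 0]mxE mulrA -normCK.
apply: le_trans (U_contr r); apply: ler_piMl; first exact: mulmx_adj_diag_ge0.
by rewrite expr_le1 // normr_ge0.
Qed.

(* Along [X = M P], the [i]-th term of [Tr(P U M)] pairs a row of [P U], of
   norm at most 1, with the [i]-th column of [M], of norm [singval X i]. *)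
Lemma re_trace_mulmx_le U X : contraction U ->
  \tr (U *m X) + (\tr (U *m X))^* <= 2%:R * trnorm X.
Proof.
move=> U_contr; rewrite {1 2}[X]svdE mulmxA mxtrace_mulC mulmxA.
rewrite /mxtrace rmorph_sum -big_split trnormE mulr_sumr /=.
apply: ler_sum => i _; rewrite mulmx_entry_row.
apply: dotmx_re_le; first exact: singval_ge0.
  rewrite row_mul; apply: le_trans (U_contr _) _.
  by rewrite mulmx_adj_row spectral_mulmx_adj mxE eqxx.
by rewrite mulmx_adj_row adjmxK -gram_eigE singvalK.
Qed.

(* [U = P^* S^-1 M^*] with [S] the singular values, so [U X = P^* S P]; as
   [0^-1 = 0], [U] is only a partial isometry when [X] is singular. *)
Definition svd_left_normal X := svd_left X *m diag_mx (\row_i (singval X i)^-1).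
Definition trnorm_witness X := adjmx (gram_basis X) *m adjmx (svd_left_normal X).

Lemma singvalV_gram_eig X i : (singval X i)^-1 * gram_eig X 0 i = singval X i.
Proof.
rewrite -singvalK; have [->|sv_neq0] := eqVneq (singval X i) 0.
  by rewrite invr0 mul0r.
by rewrite expr2 mulKf.
Qed.

Lemma gram_svd_left_normal X :
  adjmx (svd_left_normal X) *m svd_left_normal X =
  diag_mx (\row_j ((singval X j)^-1 * gram_eig X 0 j * (singval X j)^-1)).
Proof.
rewrite /svd_left_normal adjmxM adjmx_diag; last first.
  by move=> i; rewrite mxE geC0_conj // invr_ge0 singval_ge0.
rewrite -mulmxA (mulmxA (adjmx (svd_left X))) gram_svd_left !mulmx_diag.
by congr diag_mx; apply/matrixP => i j; rewrite !mxE mulrA.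
Qed.

Lemma contraction_trnorm_witness X : contraction (trnorm_witness X).
Proof.
move=> r; rewrite /trnorm_witness mulmxA; set q := r *m adjmx (gram_basis X).
rewrite adjmxM adjmxK mulmxA -(mulmxA q) gram_svd_left_normal.
have -> : (r *m adjmx r) 0 0 = (q *m adjmx q) 0 0.
  by rewrite /q adjmxM adjmxK mulmxA -(mulmxA r) adj_spectral_mulmx mulmx1.
rewrite mul_mx_diag !mulmx_adjE; apply: ler_sum => k _; rewrite !mxE.
rewrite mulrAC [X in X <= _]mulrC; apply: ler_piMl; first exact: mul_conjC_ge0.
rewrite singvalV_gram_eig; have [->|sv_neq0] := eqVneq (singval X k) 0.
  by rewrite mul0r ler01.
by rewrite mulfV.
Qed.

Lemma trace_trnorm_witness X : \tr (trnorm_witness X *m X) = trnorm X.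
Proof.
have -> : trnorm_witness X *m X =
    adjmx (gram_basis X) *m (adjmx (svd_left_normal X) *m svd_left X *m gram_basis X).
  by rewrite -mulmxA -svdE /trnorm_witness mulmxA.
rewrite mxtrace_mulC -(mulmxA _ (gram_basis X)) spectral_mulmx_adj mulmx1.
rewrite trnormE /mxtrace; apply: eq_bigr => i _.
rewrite -[RHS]singvalV_gram_eig gram_eigE !mxE mulr_sumr; apply: eq_bigr => k _.
rewrite !adjmxE /svd_left_normal mul_mx_diag !mxE rmorphM /=.
by rewrite (@geC0_conj _ (singval X i)^-1) ?invr_ge0 ?singval_ge0 // mulrAC mulrC.
Qed.

End TraceNormDuality.

Section TraceNorm.
Variables (C : numClosedFieldType) (n : nat).
Implicit Types A B U : 'M[C]_n.

Lemma trace_mulmx_le U A : contraction U -> 0 <= \tr (U *m A) ->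
  \tr (U *m A) <= trnorm A.
Proof.
move=> U_contr tr_ge0; have := re_trace_mulmx_le A U_contr.
by rewrite geC0_conj // -mulr2n -[_ *+ 2]mulr_natl ler_pM2l ?ltr0n.
Qed.

Lemma trnorm0 : trnorm (0 : 'M[C]_n) = 0.
Proof. by rewrite -(trace_trnorm_witness 0) mulmx0 linear0. Qed.

Lemma trnormD A B : trnorm (A + B) <= trnorm A + trnorm B.
Proof.
rewrite -(ler_pM2l (ltr0n C 2)) mulrDr.
set U := trnorm_witness (A + B).
have -> : 2%:R * trnorm (A + B) = \tr (U *m (A + B)) + (\tr (U *m (A + B)))^*.
  by rewrite trace_trnorm_witness geC0_conj ?trnorm_ge0 // mulr_natl mulr2n.
rewrite mulmxDr linearD rmorphD /= addrACA.
by apply: lerD; apply: re_trace_mulmx_le; apply: contraction_trnorm_witness.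
Qed.

Lemma trnormZ (c : C) A : trnorm (c *: A) <= `|c| * trnorm A.
Proof.
have [->|c_neq0] := eqVneq c 0; first by rewrite scale0r trnorm0 normr0 mul0r.
have c_gt0 : 0 < `|c| by rewrite normr_gt0.
set U := trnorm_witness (c *: A).
have trUA : \tr ((c / `|c|) *: U *m A) = trnorm (c *: A) / `|c|.
  by rewrite -(trace_trnorm_witness (c *: A)) -scalemxAr -scalemxAl !linearZ mulrAC.
have u_le1 : `|c / `|c| | <= 1 by rewrite normrM normfV normr_id mulfV ?gt_eqF.
have := trace_mulmx_le (A := A) (contractionZ u_le1 (contraction_trnorm_witness (c *: A))).
rewrite trUA => /(_ (divr_ge0 (trnorm_ge0 _) (ltW c_gt0))).
by rewrite ler_pdivrMr // mulrC.
Qed.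

Lemma trace_le_trnorm A : `|\tr A| <= trnorm A.
Proof.
have [->|tr_neq0] := eqVneq (\tr A) 0; first by rewrite normr0 trnorm_ge0.
set w := (\tr A)^* / `|\tr A|.
have trwA : \tr ((w *: 1%:M) *m A) = `|\tr A|.
  rewrite -scalemxAl mul1mx linearZ /= /w mulrAC mulrC -normCKC.
  by rewrite expr2 mulKf ?normr_eq0.
have w_le1 : `|w| <= 1.
  by rewrite normrM normfV normr_id norm_conjC mulfV ?normr_eq0.
rewrite -trwA; apply: trace_mulmx_le; first by apply: contractionZ w_le1 _; apply: contraction1.
by rewrite trwA normr_ge0.
Qed.

End TraceNorm.

Section PositiveSemidefinite.
Variables (C : numClosedFieldType) (n : nat).
Implicit Types A H : 'M[C]_n.

Definition qform H (v : 'cV[C]_n) := (adjmx v *m H *m v) 0 0.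

Lemma qform_delta H i j :
  (adjmx (delta_mx i 0 : 'cV[C]_n) *m H *m (delta_mx j 0 : 'cV[C]_n)) 0 0 = H i j.
Proof.
have -> : adjmx (delta_mx i 0 : 'cV[C]_n) = delta_mx 0 i.
  by apply/matrixP => a b; rewrite adjmxE !mxE rmorph_nat andbC eq_sym.
by rewrite -(rowE i H) -(colE j (row i H)) !mxE.
Qed.

Lemma qform_deltaDZ H i j (x : C) :
  qform H (delta_mx i 0 + x *: delta_mx j 0) =
  qform H (delta_mx i 0) + x * H i j + x^* * H j i + x^* * x * qform H (delta_mx j 0).
Proof.
rewrite /qform adjmxD adjmxZ !mulmxDl !mulmxDr -!scalemxAl -!scalemxAr.
do 3 rewrite ?[((_ : 'M_1) + _) 0 0]mxE ?[(_ *: (_ : 'M_1)) 0 0]mxE.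
by rewrite !qform_delta !addrA mulrA.
Qed.

(* Polarization at [e_i + e_j] and [e_i + 'i e_j]. *)
Lemma qform_eq0 H : (forall v, qform H v = 0) -> H = 0.
Proof.
move=> H_q0; apply/matrixP => i j; rewrite [RHS]mxE.
have := qform_deltaDZ H i j 1; rewrite !H_q0 rmorph1 !mul1r !add0r addr0 => sum0.
have := qform_deltaDZ H i j 'i; rewrite !H_q0 mulr0 add0r addr0 conjCi => diff0.
have /eqP : 'i * (H i j - H j i) = 0 by rewrite mulrBr -mulNr -diff0.
rewrite mulf_eq0 (negPf (neq0Ci C)) /= subr_eq0 => /eqP Hji.
by apply/eqP; move: sum0; rewrite -Hji -mulr2n => /esym/eqP; rewrite mulrn_eq0.
Qed.

Lemma psd_adjmx A : psdmx A -> adjmx A = A.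
Proof.
move=> A_psd; apply/eqP; rewrite -subr_eq0; apply/eqP/qform_eq0 => v.
rewrite /qform mulmxBr mulmxBl [((_ : 'M_1) - _) 0 0]mxE [(- (_ : 'M_1)) 0 0]mxE.
have -> : (adjmx v *m adjmx A *m v) 0 0 = ((adjmx v *m A *m v) 0 0)^*.
  by rewrite -adjmxE !adjmxM adjmxK mulmxA.
by rewrite geC0_conj ?subrr //; apply: A_psd.
Qed.

(* Diagonalize [A = R^* L R] and bound each term of [Tr(U A)] by Cauchy–Schwarz,
   [U] being the trace norm witness of [A]. *)
Lemma trnorm_psd_le A : psdmx A -> trnorm A <= \tr A.
Proof.
move=> A_psd; set R := spectralmx A; set L := spectral_diag A.
have AE : A = adjmx R *m diag_mx L *m R := spectral_decomp (psd_adjmx A_psd).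
have RAR : R *m A *m adjmx R = diag_mx L.
  by rewrite AE !mulmxA spectral_mulmx_adj mul1mx -mulmxA spectral_mulmx_adj mulmx1.
have L_ge0 i : 0 <= L 0 i.
  have := A_psd (adjmx (row i R)).
  by rewrite adjmxK -row_mul mulmx_adj_row RAR mxE eqxx mulr1n.
have trA : \tr A = \sum_i L 0 i.
  by rewrite -mxtrace_diag -RAR mxtrace_mulC mulmxA adj_spectral_mulmx mul1mx.
set U := trnorm_witness A.
have trUA : \tr (U *m A) = \sum_i (R *m U *m adjmx R) i i * L 0 i.
  rewrite {1}AE !mulmxA mxtrace_mulC !mulmxA mul_mx_diag /mxtrace.
  by apply: eq_bigr => i _; rewrite mxE.
rewrite -(ler_pM2l (ltr0n C 2)).
have -> : 2%:R * trnorm A = \tr (U *m A) + (\tr (U *m A))^*.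
  by rewrite trace_trnorm_witness geC0_conj ?trnorm_ge0 // mulr_natl mulr2n.
rewrite trUA rmorph_sum -big_split trA mulr_sumr /=.
apply: ler_sum => i _; rewrite rmorphM /= (geC0_conj (L_ge0 i)) -mulrDl.
rewrite mulrC [X in _ <= X]mulrC; apply: ler_wpM2l; first exact: L_ge0.
rewrite -mulmx_adj_row -[2%:R]mulr1.
apply: dotmx_re_le ler01 _ _.
  rewrite row_mul; apply: le_trans (contraction_trnorm_witness A _) _.
  by rewrite mulmx_adj_row spectral_mulmx_adj mxE eqxx.
by rewrite mulmx_adj_row spectral_mulmx_adj mxE eqxx expr1n.
Qed.

End PositiveSemidefinite.

Section ErgodicityCoefficient.
Variables (C : numClosedFieldType) (D : nat) (tau : C).

Lemma ergodicity_coeff_contract (F : {linear 'M[C]_D -> 'M[C]_D}) Y :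
  ergodicity_coeff F tau -> \tr Y = 0 -> trnorm (F Y) <= tau * trnorm Y.
Proof.
move=> [tau_ub _] trY; have [->|Y_neq0] := eqVneq Y 0.
  by rewrite linear0 trnorm0 mulr0.
have := tau_ub _ (ex_intro _ Y (And3 Y_neq0 trY erefl)).
by rewrite ler_pdivrMr ?trnorm_gt0.
Qed.

(* If [tau < 0], the ergodicity set is empty, so [tau - 1] is an upper bound too. *)
Lemma ergodicity_coeff_ge0 (F : 'M[C]_D -> 'M[C]_D) :
  ergodicity_coeff F tau -> tau \is Num.real -> 0 <= tau.
Proof.
move=> [tau_ub tau_lub] /real_ge0P[] // tau_lt0.
have : tau <= tau - 1.
  apply: tau_lub => _ [s [s_neq0 trs ->]]; exfalso.
  have s_ge0 : 0 <= trnorm (F s) / trnorm s by rewrite divr_ge0 ?trnorm_ge0.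
  have := tau_ub _ (ex_intro _ s (And3 s_neq0 trs erefl)).
  by move=> /(le_trans s_ge0)/le_lt_trans/(_ tau_lt0); rewrite ltxx.
by rewrite lerDl oppr_ge0 ler10.
Qed.

End ErgodicityCoefficient.

Definition fundamental_map (C : numClosedFieldType) D
  (F : {linear 'M[C]_D -> 'M[C]_D}) (rho X : 'M[C]_D) : 'M[C]_D :=
  X - F X + Finf rho X.

Fact fundamental_map_is_linear (C : numClosedFieldType) D
  (F : {linear 'M[C]_D -> 'M[C]_D}) (rho : 'M[C]_D) : linear (fundamental_map F rho).
Proof.
move=> a u v; rewrite /fundamental_map /Finf.
rewrite [F (a *: u + v)]linearP [\tr (a *: u + v)]linearP /=.
rewrite scalerDl -scalerA scalerDr !scalerDr !scalerN.
by rewrite opprD (addrACA (a *: u) v) (addrACA (a *: u - a *: F u)).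
Qed.

HB.instance Definition _ (C : numClosedFieldType) D
  (F : {linear 'M[C]_D -> 'M[C]_D}) (rho : 'M[C]_D) :=
  GRing.isLinear.Build C 'M[C]_D 'M[C]_D *:%R (fundamental_map F rho)
    (fundamental_map_is_linear F rho).

Section FundamentalMap.
Variables (C : numClosedFieldType) (D : nat) (F : {linear 'M[C]_D -> 'M[C]_D}).
Variables (rho : 'M[C]_D) (tau : C).
Hypothesis F_tr : trace_preserving F.
Hypothesis rho_tr : \tr rho = 1.
Hypothesis F_rho : F rho = rho.
Hypothesis F_contract : forall Y, \tr Y = 0 -> trnorm (F Y) <= tau * trnorm Y.
Hypothesis tau_ge0 : 0 <= tau.
Hypothesis tau_lt1 : tau < 1.

Lemma trace_fundamental_map X : \tr (fundamental_map F rho X) = \tr X.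
Proof.
rewrite /fundamental_map /Finf !linearD /= linearN linearZ /= F_tr rho_tr.
by rewrite mulr1 addrN add0r.
Qed.

Lemma fundamental_map_eq0 W : fundamental_map F rho W = 0 -> W = 0.
Proof.
move=> GW0; have trW : \tr W = 0 by rewrite -trace_fundamental_map GW0 linear0.
move: GW0; rewrite /fundamental_map /Finf trW scale0r addr0 => /eqP.
rewrite subr_eq0 => /eqP FW; apply/eqP; apply: contraT => W_neq0.
have := F_contract trW; rewrite -FW -{1}[trnorm W]mul1r ler_pM2r ?trnorm_gt0 //.
by move=> /(lt_le_trans tau_lt1); rewrite ltxx.
Qed.

Hypothesis rho_trnorm : trnorm rho <= 1.

Lemma trnorm_fundamental_map_le W X : fundamental_map F rho W = X ->
  trnorm W <= (1 + tau) / (1 - tau) * trnorm X.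
Proof.
move=> GW; have trW : \tr W = \tr X by rewrite -GW trace_fundamental_map.
set Y := W - \tr X *: rho.
have trY : \tr Y = 0 by rewrite /Y linearB /= linearZ /= rho_tr mulr1 trW subrr.
have FY : F Y = F W - \tr X *: rho by rewrite /Y linearB /= linearZ /= F_rho.
have WE : W = X + F Y.
  rewrite FY -{1}GW /fundamental_map /Finf trW -addrA [\tr X *: rho + _]addrC.
  by rewrite addrNK subrK.
have YE : Y = (X - \tr X *: rho) + F Y by rewrite {1}/Y {1}WE addrAC.
have tau1_gt0 : 0 < 1 - tau by rewrite subr_gt0.
have X_rho_le : trnorm (X - \tr X *: rho) <= 2%:R * trnorm X.
  apply: le_trans (trnormD _ _) _; rewrite -scaleNr mulr2n mulrDl mul1r lerD2l.
  apply: le_trans (trnormZ _ _) _; rewrite normrN.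
  by apply: le_trans (trace_le_trnorm X); apply: ler_piMr.
have Y_le : tau * trnorm Y <= tau * (2%:R * trnorm X / (1 - tau)).
  apply: ler_wpM2l => //; rewrite ler_pdivlMr // mulrC.
  apply: le_trans X_rho_le; rewrite mulrBl mul1r lerBlDr {1}YE.
  by apply: le_trans (trnormD _ _) _; rewrite lerD2l F_contract.
have -> : (1 + tau) / (1 - tau) * trnorm X =
    trnorm X + tau * (2%:R * trnorm X / (1 - tau)).
  by field; rewrite subr_eq0 eq_sym lt_eqF.
rewrite WE; apply: le_trans (trnormD _ _) _; rewrite lerD2l.
exact: le_trans (F_contract trY) Y_le.
Qed.

End FundamentalMap.

Theorem mainTheorem8 (C : numClosedFieldType) (D : nat)
  (F : {linear 'M[C]_D -> 'M[C]_D}) (tau : C) (rho : 'M[C]_D) :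
  completely_positive F -> trace_preserving F ->
  ergodicity_coeff F tau -> tau < 1 ->
  densitymx rho -> F rho = rho ->
  (forall sigma, densitymx sigma -> F sigma = sigma -> sigma = rho) ->
  exists Z : {linear 'M[C]_D -> 'M[C]_D},
    fundamental_channel F rho Z /\
    (forall X : 'M[C]_D, X != 0 ->
       trnorm (Z X) / trnorm X <= (1 + tau) / (1 - tau)).
Proof.
move=> _ F_tr tau_erg tau_lt1 [rho_psd rho_tr] F_rho _.
have tau_ge0 := ergodicity_coeff_ge0 tau_erg (ler1_real (ltW tau_lt1)).
have F_contract Y := @ergodicity_coeff_contract C D tau F Y tau_erg.
have rho_trnorm : trnorm rho <= 1 by rewrite -rho_tr trnorm_psd_le.
pose G := linfun (fundamental_map F rho).
have GE X : G X = fundamental_map F rho X by rewrite lfunE.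
have G_inj : lker G == 0%VS.
  apply/lker0P => X Y; rewrite !GE => GXY; apply/eqP; rewrite -subr_eq0; apply/eqP.
  by apply: (fundamental_map_eq0 F_tr rho_tr F_contract tau_lt1); rewrite linearB /= GXY subrr.
exists (fun_of_lfun (G^-1)%VF); split.
  by split=> X /=; [have := lker0_lfunK G_inj X | have := lker0_lfunVK G_inj X]; rewrite GE.
move=> X X_neq0 /=; rewrite ler_pdivrMr ?trnorm_gt0 //.
apply: (trnorm_fundamental_map_le F_tr rho_tr F_rho F_contract tau_ge0 tau_lt1 rho_trnorm).
by rewrite -GE lker0_lfunVK.
Qed.
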